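(* Let $g_1,g_2$ be independent exponential random variables with means $\varepsilon_1,\varepsilon_2>0$, let $P_s,P_d,\sigma^2>0$ and $R_d>0$, and put $\gamma_o=2^{2R_d}-1$. Then the connection outage probability of amplify-and-forward relaying, $$p_o^{\mathrm{AF}}=\Pr\Big(\frac{P_s^2g_1g_2}{\sigma^2[P_sg_1+(P_s+P_d)g_2+\sigma^2]}<\gamma_o\Big),$$ equals $$1-e^{-\frac{\gamma_o\sigma^2}{P_s}\left(\frac{P_s+P_d}{P_s\varepsilon_1}+\frac1{\varepsilon_2}\right)}\,z\,K_1(z),\qquad z=\frac{2\gamma_o\sigma^2}{P_s}\sqrt{\frac{1}{\varepsilon_1\varepsilon_2}\Big(\frac{P_s+P_d}{P_s}+\frac1{\gamma_o}\Big)},$$ where $K_1$ is the first-order modified Bessel function of the second kind.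
   Context: In amplify-and-forward (AF) relaying the relay scales its received signal $h_1x_s+h_2x_d+n_r$ by $\tau=\sqrt{P_s/(g_1P_s+g_2P_d+\sigma^2)}$ and forwards it; after the destination removes its own known artificial noise, the end-to-end SNR is $\frac{P_s^2g_1g_2}{\sigma^2[P_sg_1+P_sg_2+P_dg_2+\sigma^2]}$. Here $g_i=|h_i|^2$, $h_i\sim\mathcal{CN}(0,\varepsilon_i)$ independent, $P_s$ the source/relay power, $P_d$ the destination's artificial-noise power, $\sigma^2$ the noise variance. *)

From Stdlib Require Import Reals Lra.
Open Scope R_scope.

Definition improper_int0 (f : R -> R) (L : R) : Prop :=
  exists pr : forall b : R, 0 <= b -> Riemann_integrable f 0 b,
    forall eps : R, 0 < eps ->
      exists M : R, 0 <= M /\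
        forall (b : R) (Hb : 0 <= b), M <= b ->
          Rabs (RiemannInt (pr b Hb) - L) < eps.

(* Modified Bessel function of the second kind of order 1, via its standard
   integral representation  K_1(z) = int_0^oo exp(-z cosh t) cosh t dt  (z > 0). *)
Definition is_BesselK1 (z k : R) : Prop :=
  improper_int0 (fun t => exp (- z * cosh t) * cosh t) k.

Definition exp_pdf (eps x : R) : R := / eps * exp (- x / eps).

Definition af_snr (Ps Pd sigma2 x y : R) : R :=
  Ps ^ 2 * x * y / (sigma2 * (Ps * x + (Ps + Pd) * y + sigma2)).

Definition indic_lt (a b : R) : R := if Rlt_dec a b then 1 else 0.

(* Pr( SNR(g1,g2) < gamma ) = p, for independent g1 ~ Exp(mean e1),
   g2 ~ Exp(mean e2), written as the iterated integral
   int_0^oo f1(x) ( int_0^oo 1{SNR(x,y) < gamma} f2(y) dy ) dx = p. *)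
Definition af_outage_prob_is (e1 e2 Ps Pd sigma2 gamma p : R) : Prop :=
  exists inner : R -> R,
    (forall x, 0 <= x ->
       improper_int0 (fun y => indic_lt (af_snr Ps Pd sigma2 x y) gamma * exp_pdf e2 y)
                     (inner x)) /\
    improper_int0 (fun x => exp_pdf e1 x * inner x) p.

From Stdlib Require Import Reals Lra Classical.
From Coquelicot Require Import Coquelicot.
Open Scope R_scope.

(* For fixed g1 = x the outage event only constrains g2: it always occurs when
   x <= x0 = γσ²(Ps+Pd)/Ps², and otherwise it reads
   g2 < y0(x) = γσ²(Ps x + σ²)/(Ps²(x - x0)).
   Integrating the law of g2 gives 1 - exp(-y0(x)/ε2), and the exponent x/ε1 + y0(x)/ε2 splits
   as a constant plus u/ε1 + β/u with u = x - x0.  The outer integral therefore reduces to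
   ∫_0^∞ exp(-αu - β/u) du, which the substitution u = √(β/α) e^t turns into
   2√(β/α) ∫_0^∞ exp(-z cosh t) cosh t dt = (z/α) K1(z), where z = 2√(αβ). *)

Lemma exp_le_exp (x y : R) : x <= y -> exp x <= exp y.
Proof. intros [Hlt|Heq]; [left; now apply exp_increasing|now rewrite Heq; right]. Qed.

Lemma improper_int0_of_is_lim (f : R -> R) (L : R) :
  (forall b, 0 <= b -> ex_RInt f 0 b) ->
  is_lim (fun b => RInt f 0 b) p_infty L -> improper_int0 f L.
Proof.
  intros Hex Hlim. exists (fun b Hb => ex_RInt_Reals_0 _ _ _ (Hex b Hb)).
  intros eps Heps. apply is_lim_spec in Hlim.
  destruct (Hlim (mkposreal eps Heps)) as [M HM].
  exists (Rmax M 0 + 1). split; [pose proof (Rmax_r M 0); lra|].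
  intros b Hb HMb. rewrite <- RInt_Reals. apply HM. pose proof (Rmax_l M 0). lra.
Qed.

Lemma is_lim_incr_bounded (F : R -> R) (M : R) :
  (forall a b, 0 <= a <= b -> F a <= F b) ->
  (forall b, 0 <= b -> F b <= M) -> exists L : R, is_lim F p_infty L.
Proof.
  intros Hincr Hbnd.
  set (E := fun y => exists b, 0 <= b /\ y = F b).
  destruct (completeness E) as [L [Hub Hlub]].
  - exists M. intros y [b [Hb ->]]. auto.
  - exists (F 0), 0. split; [lra|reflexivity].
  - exists L. apply is_lim_spec. intros [eps Heps]; simpl.
    assert (Hnot : ~ is_upper_bound E (L - eps))
      by (intros H; specialize (Hlub _ H); lra).
    apply not_all_ex_not in Hnot as [y Hy].
    apply imply_to_and in Hy as [[b0 [Hb0 ->]] Hlt].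
    exists b0. intros b Hb.
    assert (F b0 <= F b) by (apply Hincr; lra).
    assert (F b <= L) by (apply Hub; exists b; split; [lra|reflexivity]).
    apply Rabs_def1; lra.
Qed.

Lemma is_lim_scal_p_infty (f : R -> R) (x : Rbar) (c : R) :
  0 < c -> is_lim f x p_infty -> is_lim (fun y => c * f y) x p_infty.
Proof.
  intros Hc Hf.
  assert (Hcp : Rbar_mult c p_infty = p_infty).
  { rewrite Rbar_mult_comm. apply is_Rbar_mult_unique, is_Rbar_mult_p_infty_pos. exact Hc. }
  rewrite <- Hcp. now apply is_lim_scal_l.
Qed.

Lemma is_lim_exp_neg_div (c : R) : 0 < c -> is_lim (fun b => exp (- b / c)) p_infty 0.
Proof.
  intros Hc. apply (is_lim_comp exp (fun b => - b / c) p_infty 0 m_infty).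
  - exact is_lim_exp_m.
  - apply (is_lim_ext (fun b => - (/ c * b))); [intros; unfold Rdiv; ring|].
    apply (is_lim_opp _ _ p_infty), is_lim_scal_p_infty, is_lim_id.
    now apply Rinv_0_lt_compat.
  - exists 0. discriminate.
Qed.

Lemma is_lim_p_infty_shift (F : R -> R) (d : R) (l : Rbar) :
  is_lim F p_infty l -> is_lim (fun b => F (b - d)) p_infty l.
Proof.
  intros HF. apply (is_lim_comp F (fun b => b - d) p_infty l p_infty);
    [exact HF| |exists 0; discriminate].
  apply (is_lim_plus _ _ p_infty p_infty (- d)); [apply is_lim_id|apply is_lim_const|reflexivity].
Qed.

Lemma is_RInt_zero (a b : R) : is_RInt (fun _ => 0) a b 0.
Proof.
  pose proof (is_RInt_const a b 0) as H.
  unfold scal in H; simpl in H; unfold mult in H; simpl in H.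
  now rewrite Rmult_0_r in H.
Qed.

Lemma is_RInt_exp_pdf (e a b : R) :
  0 < e -> is_RInt (exp_pdf e) a b (exp (- a / e) - exp (- b / e)).
Proof.
  intros He.
  replace (exp (- a / e) - exp (- b / e))
    with (minus ((fun y => - exp (- y / e)) b) ((fun y => - exp (- y / e)) a))
    by (unfold minus, plus, opp; simpl; ring).
  apply (is_RInt_derive (fun y => - exp (- y / e)) (exp_pdf e)).
  - intros x _. unfold exp_pdf. auto_derive; [auto|]. unfold Rdiv. ring.
  - intros x _. apply (ex_derive_continuous (exp_pdf e)). unfold exp_pdf. auto_derive. auto.
Qed.

Lemma is_RInt_exp_pdf_0 (e b : R) :
  0 < e -> is_RInt (exp_pdf e) 0 b (1 - exp (- b / e)).
Proof.
  intros He. replace 1 with (exp (- 0 / e)) at 1.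
  - now apply is_RInt_exp_pdf.
  - replace (- 0 / e) with 0 by (unfold Rdiv; ring). apply exp_0.
Qed.

Lemma is_lim_exp_cdf (e : R) : 0 < e -> is_lim (fun b => 1 - exp (- b / e)) p_infty 1.
Proof.
  intros He. replace (Finite 1) with (Finite (1 - 0)) by (f_equal; ring).
  apply is_lim_minus'; [apply is_lim_const|now apply is_lim_exp_neg_div].
Qed.

Lemma improper_int0_exp_pdf (e : R) (g : R -> R) :
  0 < e -> (forall y, 0 < y -> g y = exp_pdf e y) -> improper_int0 g 1.
Proof.
  intros He Hg.
  assert (HI : forall b, 0 <= b -> is_RInt g 0 b (1 - exp (- b / e))).
  { intros b Hb. apply is_RInt_ext with (exp_pdf e); [|now apply is_RInt_exp_pdf_0].
    intros y Hy. rewrite Rmin_left in Hy by lra. symmetry. apply Hg. lra. }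
  apply improper_int0_of_is_lim.
  - intros b Hb. eexists. now apply HI.
  - apply is_lim_ext_loc with (fun b => 1 - exp (- b / e)).
    + exists 0. intros b Hb. symmetry. apply is_RInt_unique, HI. lra.
    + now apply is_lim_exp_cdf.
Qed.

Lemma improper_int0_exp_pdf_trunc (e k : R) (g : R -> R) :
  0 < e -> 0 <= k ->
  (forall y, 0 < y < k -> g y = exp_pdf e y) -> (forall y, k < y -> g y = 0) ->
  improper_int0 g (1 - exp (- k / e)).
Proof.
  intros He Hk Hlow Hhigh.
  assert (Hhead : forall b, 0 <= b <= k -> is_RInt g 0 b (1 - exp (- b / e))).
  { intros b Hb. apply is_RInt_ext with (exp_pdf e); [|now apply is_RInt_exp_pdf_0].
    intros y Hy. rewrite Rmin_left, Rmax_right in Hy by lra. symmetry. apply Hlow. lra. }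
  assert (Hall : forall b, k <= b -> is_RInt g 0 b (1 - exp (- k / e))).
  { intros b Hb.
    assert (Htail : is_RInt g k b 0).
    { apply is_RInt_ext with (fun _ => 0).
      - intros y Hy. rewrite Rmin_left in Hy by lra. symmetry. apply Hhigh. lra.
      - apply is_RInt_zero. }
    pose proof (is_RInt_Chasles g 0 k b _ _ (Hhead k ltac:(lra)) Htail) as HC.
    unfold plus in HC; simpl in HC. now rewrite Rplus_0_r in HC. }
  apply improper_int0_of_is_lim.
  - intros b Hb. destruct (Rle_dec b k).
    + eexists. apply Hhead. lra.
    + eexists. apply Hall. lra.
  - apply is_lim_ext_loc with (fun _ => 1 - exp (- k / e)); [|apply is_lim_const].
    exists k. intros b Hb. symmetry. apply is_RInt_unique, Hall. lra.
Qed.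

Definition bessel_kernel (al be u : R) : R :=
  if Rlt_dec 0 u then exp (- (al * u) - be / u) else 0.

Section BesselKernel.

Variables al be : R.
Hypotheses (Hal : 0 < al) (Hbe : 0 < be).

Lemma bessel_kernel_nonneg (u : R) : 0 <= bessel_kernel al be u.
Proof. unfold bessel_kernel. destruct (Rlt_dec 0 u); [left; apply exp_pos|lra]. Qed.

Lemma bessel_kernel_le_1 (u : R) : bessel_kernel al be u <= 1.
Proof.
  unfold bessel_kernel. destruct (Rlt_dec 0 u); [|lra]. rewrite <- exp_0.
  apply exp_le_exp. assert (0 < be / u) by (apply Rdiv_lt_0_compat; lra). nra.
Qed.

Lemma bessel_kernel_le_exp_pdf (u : R) : bessel_kernel al be u <= / al * exp_pdf (/ al) u.
Proof.
  unfold bessel_kernel, exp_pdf. rewrite Rinv_inv, <- Rmult_assoc, Rinv_l, Rmult_1_l by lra.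
  destruct (Rlt_dec 0 u); [|left; apply exp_pos].
  apply exp_le_exp. replace (- u / / al) with (- (al * u)) by (field; lra).
  assert (0 < be / u) by (apply Rdiv_lt_0_compat; lra). lra.
Qed.

Lemma bessel_kernel_lt_div (u : R) : 0 < u -> bessel_kernel al be u < u / be.
Proof.
  intros Hu. unfold bessel_kernel. destruct (Rlt_dec 0 u); [|lra].
  assert (Hbu : 0 < be / u) by (apply Rdiv_lt_0_compat; lra).
  apply Rle_lt_trans with (exp (- (be / u))); [apply exp_le_exp; nra|].
  rewrite exp_Ropp. replace (u / be) with (/ (be / u)) by (field; lra).
  apply Rinv_lt_contravar; [apply Rmult_lt_0_compat; [lra|apply exp_pos]|].
  pose proof (exp_ineq1_le (be / u)). lra.
Qed.

Lemma bessel_kernel_continuous (u : R) : continuous (bessel_kernel al be) u.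
Proof.
  apply continuity_pt_filterlim. destruct (Rlt_or_le 0 u) as [Hu|Hu].
  - apply continuity_pt_locally_ext with (fun y => exp (- (al * y) - be / y)) u; [exact Hu| |].
    + intros y Hy. unfold bessel_kernel. destruct (Rlt_dec 0 y); [reflexivity|].
      unfold Rdist in Hy. apply Rabs_def2 in Hy. lra.
    + apply continuity_pt_filterlim.
      apply (ex_derive_continuous (fun y => exp (- (al * y) - be / y))). auto_derive. lra.
  - intros eps Heps. exists (eps * be). split; [nra|].
    intros y [_ Hy]. simpl in *. unfold Rdist in Hy.
    replace (bessel_kernel al be u) with 0
      by (unfold bessel_kernel; destruct (Rlt_dec 0 u); lra).
    unfold Rdist. rewrite Rminus_0_r, Rabs_pos_eq by apply bessel_kernel_nonneg.
    destruct (Rlt_or_le 0 y) as [Hy0|Hy0].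
    + apply Rabs_def2 in Hy. apply Rlt_le_trans with (y / be); [now apply bessel_kernel_lt_div|].
      apply Rmult_le_reg_r with be; [lra|]. unfold Rdiv. rewrite Rmult_assoc, Rinv_l; lra.
    + unfold bessel_kernel. destruct (Rlt_dec 0 y); lra.
Qed.

Lemma ex_RInt_bessel_kernel (a b : R) : ex_RInt (bessel_kernel al be) a b.
Proof.
  apply (@ex_RInt_continuous R_CompleteNormedModule). intros. apply bessel_kernel_continuous.
Qed.

Lemma RInt_bessel_kernel_nonneg (a b : R) : a <= b -> 0 <= RInt (bessel_kernel al be) a b.
Proof.
  intros Hab. apply RInt_ge_0; [exact Hab|apply ex_RInt_bessel_kernel|].
  intros. apply bessel_kernel_nonneg.
Qed.

Lemma RInt_bessel_kernel_le_id (b : R) : 0 <= b -> RInt (bessel_kernel al be) 0 b <= b.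
Proof.
  intros Hb. apply Rle_trans with (RInt (fun _ => 1) 0 b).
  - apply RInt_le; [exact Hb|apply ex_RInt_bessel_kernel|apply ex_RInt_const|].
    intros. apply bessel_kernel_le_1.
  - rewrite RInt_const. unfold scal; simpl; unfold mult; simpl. lra.
Qed.

Lemma RInt_bessel_kernel_le_inv (b : R) : 0 <= b -> RInt (bessel_kernel al be) 0 b <= / al.
Proof.
  intros Hb. assert (Hal' : 0 < / al) by now apply Rinv_0_lt_compat.
  pose proof (is_RInt_scal _ _ _ (/ al) _ (is_RInt_exp_pdf_0 (/ al) b Hal')) as HI.
  unfold scal in HI; simpl in HI; unfold mult in HI; simpl in HI.
  apply Rle_trans with (/ al * (1 - exp (- b / / al))).
  - rewrite <- (is_RInt_unique _ _ _ _ HI).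
    apply RInt_le; [exact Hb|apply ex_RInt_bessel_kernel| |].
    + eexists. exact HI.
    + intros. apply bessel_kernel_le_exp_pdf.
  - pose proof (exp_pos (- b / / al)). nra.
Qed.

Lemma is_lim_RInt_bessel_kernel :
  exists L : R, is_lim (fun b => RInt (bessel_kernel al be) 0 b) p_infty L.
Proof.
  apply (is_lim_incr_bounded _ (/ al)); [|exact RInt_bessel_kernel_le_inv].
  intros a b Hab. rewrite <- (RInt_Chasles _ 0 a b) by apply ex_RInt_bessel_kernel.
  pose proof (RInt_bessel_kernel_nonneg a b (proj2 Hab)). unfold plus; simpl. lra.
Qed.

Lemma is_RInt_bessel_kernel_shift (d b : R) : 0 <= d ->
  is_RInt (fun x => bessel_kernel al be (x - d)) 0 b (RInt (bessel_kernel al be) 0 (b - d)).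
Proof.
  intros Hd.
  assert (Hneg : RInt (bessel_kernel al be) (- d) 0 = 0).
  { apply is_RInt_unique, (is_RInt_ext (fun _ => 0)); [|apply is_RInt_zero].
    intros x Hx. rewrite Rmax_right in Hx by lra.
    unfold bessel_kernel. destruct (Rlt_dec 0 x); lra. }
  replace (RInt (bessel_kernel al be) 0 (b - d)) with (RInt (bessel_kernel al be) (- d) (b - d)).
  - apply (is_RInt_ext (fun x => scal 1 (bessel_kernel al be (1 * x + - d)))).
    + intros x _. replace (1 * x + - d) with (x - d) by ring. exact (scal_one _).
    + apply (is_RInt_comp_lin (bessel_kernel al be) 1 (- d) 0 b).
      replace (1 * 0 + - d) with (- d) by ring. replace (1 * b + - d) with (b - d) by ring.
      apply (RInt_correct (V := R_CompleteNormedModule)), ex_RInt_bessel_kernel.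
  - rewrite <- (RInt_Chasles _ (- d) 0 (b - d)) by apply ex_RInt_bessel_kernel.
    rewrite Hneg. exact (plus_zero_l _).
Qed.

Variable z : R.
Hypotheses (Hz : 0 < z) (Hzab : z ^ 2 = 4 * al * be).

Let s := z / (2 * al).

Lemma bessel_kernel_exp (t : R) : bessel_kernel al be (s * exp t) = exp (- z * cosh t).
Proof.
  assert (Hs : 0 < s) by (unfold s; apply Rdiv_lt_0_compat; lra).
  pose proof (exp_pos t) as Ht.
  unfold bessel_kernel. destruct (Rlt_dec 0 (s * exp t)) as [_|Hn]; [|nra].
  f_equal. replace be with (z ^ 2 / (4 * al)) by (rewrite Hzab; field; lra).
  unfold s, cosh. rewrite exp_Ropp. field. lra.
Qed.

Lemma is_RInt_bessel_kernel_subst (sg T : R) :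
  is_RInt (fun t => sg * s * exp (sg * t) * exp (- z * cosh (sg * t))) 0 T
    (RInt (bessel_kernel al be) s (s * exp (sg * T))).
Proof.
  pose proof (is_RInt_comp (bessel_kernel al be) (fun t => s * exp (sg * t))
    (fun t => sg * s * exp (sg * t)) 0 T) as HI.
  cbv beta in HI. rewrite Rmult_0_r, exp_0, Rmult_1_r in HI.
  apply (is_RInt_ext
    (fun t => scal (sg * s * exp (sg * t)) (bessel_kernel al be (s * exp (sg * t))))).
  - intros t _. now rewrite bessel_kernel_exp.
  - apply HI; intros t _; [apply bessel_kernel_continuous|split].
    + auto_derive; [exact I|ring].
    + apply (ex_derive_continuous (fun t => sg * s * exp (sg * t))). auto_derive. exact I.
Qed.

Lemma ex_RInt_BesselK1_integrand (a b : R) : ex_RInt (fun t => exp (- z * cosh t) * cosh t) a b.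
Proof.
  apply (@ex_RInt_continuous R_CompleteNormedModule). intros t _.
  apply (ex_derive_continuous (fun t => exp (- z * cosh t) * cosh t)).
  unfold cosh. auto_derive. exact I.
Qed.

(* The substitutions u = s e^t and u = s e^-t cover [s e^-T, s e^T];
   their Jacobians add up to 2 s cosh t. *)
Lemma RInt_bessel_kernel_sym (T : R) :
  RInt (bessel_kernel al be) (s * exp (- T)) (s * exp T)
  = 2 * s * RInt (fun t => exp (- z * cosh t) * cosh t) 0 T.
Proof.
  pose proof (is_RInt_minus _ _ _ _ _ _
    (is_RInt_bessel_kernel_subst 1 T) (is_RInt_bessel_kernel_subst (-1) T)) as HI.
  rewrite <- (RInt_scal (V := R_CompleteNormedModule)) by apply ex_RInt_BesselK1_integrand.
  rewrite <- (RInt_Chasles _ _ s) by apply ex_RInt_bessel_kernel.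
  rewrite <- (opp_RInt_swap (V := R_CompleteNormedModule)) by apply ex_RInt_bessel_kernel.
  replace (- T) with (-1 * T) by ring. rewrite <- (Rmult_1_l T) at 2.
  unfold minus, plus, opp in HI |- *; simpl in HI |- *. rewrite Rplus_comm.
  symmetry. apply is_RInt_unique. eapply is_RInt_ext; [|exact HI].
  intros t _. unfold scal, cosh; simpl; unfold mult; simpl.
  replace (-1 * t) with (- t) by ring.
  rewrite !Rmult_1_l, Ropp_involutive, (Rplus_comm (exp (- t))). field.
Qed.

Lemma is_BesselK1_of_bessel_kernel :
  exists K, is_BesselK1 z K /\
    is_lim (fun b => RInt (bessel_kernel al be) 0 b) p_infty (z / al * K).
Proof.
  assert (Hs : 0 < s) by (unfold s; apply Rdiv_lt_0_compat; lra).
  set (H := fun b => RInt (bessel_kernel al be) 0 b).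
  destruct is_lim_RInt_bessel_kernel as [L HL].
  assert (Hhi : is_lim (fun T => H (s * exp T)) p_infty L).
  { apply (is_lim_comp H (fun T => s * exp T) p_infty L p_infty); [exact HL| |].
    - now apply is_lim_scal_p_infty, is_lim_exp_p.
    - exists 0. discriminate. }
  assert (Hlo : is_lim (fun T => H (s * exp (- T))) p_infty 0).
  { apply (is_lim_le_le_loc (fun _ => 0) (fun T => s * exp (- T))).
    - exists 0. intros T _. pose proof (exp_pos (- T)).
      split; [apply RInt_bessel_kernel_nonneg|apply RInt_bessel_kernel_le_id]; nra.
    - apply is_lim_const.
    - replace (Finite 0) with (Rbar_mult s 0) by (simpl; f_equal; ring).
      apply is_lim_scal_l, (is_lim_ext (fun T => exp (- T / 1))).
      + intros T. f_equal. field.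
      + apply is_lim_exp_neg_div; lra. }
  exists (L / (2 * s)). split.
  - apply improper_int0_of_is_lim; [intros; apply ex_RInt_BesselK1_integrand|].
    apply (is_lim_ext (fun T => / (2 * s) * (H (s * exp T) - H (s * exp (- T))))).
    + intros T. unfold H. rewrite <- (RInt_Chasles _ 0 (s * exp (- T)) (s * exp T))
        by apply ex_RInt_bessel_kernel.
      rewrite RInt_bessel_kernel_sym. unfold plus; simpl. field. lra.
    + replace (L / (2 * s)) with (/ (2 * s) * (L - 0)) by (field; lra).
      apply (is_lim_scal_l _ _ _ (L - 0)), is_lim_minus'; [exact Hhi|exact Hlo].
  - replace (z / al * (L / (2 * s))) with L by (unfold s; field; lra). exact HL.
Qed.

End BesselKernel.

Section OutageRegion.

Variables Ps Pd s2 g e1 e2 : R.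
Hypotheses (HPs : 0 < Ps) (HPd : 0 < Pd) (Hs2 : 0 < s2) (Hg : 0 < g) (He1 : 0 < e1) (He2 : 0 < e2).

Definition outage_x0 : R := g * s2 * (Ps + Pd) / Ps ^ 2.

Definition outage_y0 (x : R) : R := g * s2 * (Ps * x + s2) / (Ps ^ 2 * (x - outage_x0)).

Lemma outage_x0_pos : 0 < outage_x0.
Proof.
  unfold outage_x0. apply Rdiv_lt_0_compat; [|now apply pow_lt].
  repeat apply Rmult_lt_0_compat; lra.
Qed.

Lemma af_snr_lt_iff (x y : R) : 0 <= x -> 0 <= y ->
  af_snr Ps Pd s2 x y < g <-> Ps ^ 2 * (x - outage_x0) * y < g * s2 * (Ps * x + s2).
Proof.
  intros Hx Hy.
  assert (0 <= Ps * x) by nra. assert (0 <= (Ps + Pd) * y) by nra.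
  assert (HD : 0 < s2 * (Ps * x + (Ps + Pd) * y + s2)) by (apply Rmult_lt_0_compat; lra).
  assert (Hsnr : Ps ^ 2 * x * y = af_snr Ps Pd s2 x y * (s2 * (Ps * x + (Ps + Pd) * y + s2)))
    by (unfold af_snr; field; lra).
  assert (Hx0 : Ps ^ 2 * (x - outage_x0) * y = Ps ^ 2 * x * y - g * s2 * (Ps + Pd) * y)
    by (unfold outage_x0; field; lra).
  rewrite Hx0, Hsnr. set (S := af_snr Ps Pd s2 x y). split; intros Hlt.
  - assert (S * (s2 * (Ps * x + (Ps + Pd) * y + s2)) < g * (s2 * (Ps * x + (Ps + Pd) * y + s2)))
      by (apply Rmult_lt_compat_r; lra).
    lra.
  - apply Rmult_lt_reg_r with (s2 * (Ps * x + (Ps + Pd) * y + s2)); lra.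
Qed.

Lemma af_snr_lt_below (x y : R) : 0 <= x <= outage_x0 -> 0 <= y -> af_snr Ps Pd s2 x y < g.
Proof.
  intros Hx Hy. apply af_snr_lt_iff; [lra|lra|].
  assert (0 <= Ps ^ 2 * ((outage_x0 - x) * y)) by (apply Rmult_le_pos; [apply pow2_ge_0|nra]).
  assert (0 < g * s2 * (Ps * x + s2)) by (apply Rmult_lt_0_compat; nra).
  lra.
Qed.

Lemma af_snr_lt_above (x y : R) : outage_x0 < x -> 0 <= y ->
  af_snr Ps Pd s2 x y < g <-> y < outage_y0 x.
Proof.
  intros Hx Hy. pose proof outage_x0_pos.
  rewrite af_snr_lt_iff by lra.
  assert (HD : 0 < Ps ^ 2 * (x - outage_x0)) by (apply Rmult_lt_0_compat; [apply pow_lt|]; lra).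
  assert (HN : g * s2 * (Ps * x + s2) = outage_y0 x * (Ps ^ 2 * (x - outage_x0)))
    by (unfold outage_y0; field; lra).
  rewrite HN, (Rmult_comm _ y). split; intros Hlt.
  - now apply Rmult_lt_reg_r in Hlt.
  - now apply Rmult_lt_compat_r.
Qed.

Lemma outage_y0_pos (x : R) : outage_x0 < x -> 0 < outage_y0 x.
Proof.
  intros Hx. pose proof outage_x0_pos.
  unfold outage_y0. apply Rdiv_lt_0_compat.
  - apply Rmult_lt_0_compat; [apply Rmult_lt_0_compat|]; nra.
  - apply Rmult_lt_0_compat; [apply pow_lt|]; lra.
Qed.

Definition outage_inner (x : R) : R :=
  if Rle_dec x outage_x0 then 1 else 1 - exp (- outage_y0 x / e2).

Lemma improper_int0_outage_inner (x : R) : 0 <= x ->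
  improper_int0 (fun y => indic_lt (af_snr Ps Pd s2 x y) g * exp_pdf e2 y) (outage_inner x).
Proof.
  intros Hx. unfold outage_inner, indic_lt.
  destruct (Rle_dec x outage_x0) as [Hle|Hgt].
  - apply (improper_int0_exp_pdf e2); [exact He2|]. intros y Hy.
    destruct (Rlt_dec _ _) as [_|Hn]; [ring|].
    exfalso. apply Hn, af_snr_lt_below; lra.
  - apply Rnot_le_lt in Hgt. pose proof (outage_y0_pos x Hgt).
    apply (improper_int0_exp_pdf_trunc e2); [exact He2|lra| |].
    + intros y Hy. destruct (Rlt_dec _ _) as [_|Hn]; [ring|].
      exfalso. apply Hn, af_snr_lt_above; lra.
    + intros y Hy. destruct (Rlt_dec _ _) as [Hl|_]; [|ring].
      apply af_snr_lt_above in Hl; lra.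
Qed.

Definition outage_beta : R := (g * s2 / Ps) ^ 2 * ((Ps + Pd) / Ps + / g) / e2.

Definition outage_c0 : R := g * s2 / Ps * ((Ps + Pd) / (Ps * e1) + / e2).

Lemma outage_gain_pos : 0 < (Ps + Pd) / Ps + / g.
Proof.
  pose proof (Rinv_0_lt_compat g Hg). assert (0 < (Ps + Pd) / Ps) by (apply Rdiv_lt_0_compat; lra).
  lra.
Qed.

Lemma outage_beta_pos : 0 < outage_beta.
Proof.
  unfold outage_beta. apply Rdiv_lt_0_compat; [|exact He2].
  apply Rmult_lt_0_compat; [apply pow_lt, Rdiv_lt_0_compat; nra|exact outage_gain_pos].
Qed.

Lemma outage_exponent_split (x : R) : outage_x0 < x ->
  x / e1 + outage_y0 x / e2
  = outage_c0 + (/ e1 * (x - outage_x0) + outage_beta / (x - outage_x0)).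
Proof.
  intros Hx.
  assert (Hd : 0 < Ps ^ 2 * (x - outage_x0)) by (apply Rmult_lt_0_compat; [apply pow_lt|]; lra).
  assert (Hd' : Ps ^ 2 * (x - outage_x0) = x * Ps ^ 2 - g * s2 * (Ps + Pd))
    by (unfold outage_x0; field; lra).
  unfold outage_y0, outage_beta, outage_c0. unfold outage_x0 in *. field. repeat split; lra.
Qed.

Lemma outage_outer_integrand_eq (x : R) :
  exp_pdf e1 x * outage_inner x
  = exp_pdf e1 x - / e1 * exp (- outage_c0) * bessel_kernel (/ e1) outage_beta (x - outage_x0).
Proof.
  unfold outage_inner, bessel_kernel.
  destruct (Rle_dec x outage_x0) as [Hle|Hgt].
  - destruct (Rlt_dec 0 (x - outage_x0)); [lra|ring].
  - destruct (Rlt_dec 0 (x - outage_x0)); [|lra].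
    unfold exp_pdf. rewrite Rmult_minus_distr_l, Rmult_1_r, Rmult_assoc, <- exp_plus.
    rewrite Rmult_assoc, <- exp_plus. do 3 f_equal.
    replace (- x / e1 + - outage_y0 x / e2) with (- (x / e1 + outage_y0 x / e2))
      by (unfold Rdiv; ring).
    rewrite outage_exponent_split by lra. field. lra.
Qed.

Lemma improper_int0_outage_outer (K : R) :
  is_lim (fun b => RInt (bessel_kernel (/ e1) outage_beta) 0 b) p_infty K ->
  improper_int0 (fun x => exp_pdf e1 x * outage_inner x) (1 - / e1 * exp (- outage_c0) * K).
Proof.
  intros HK. set (c := / e1 * exp (- outage_c0)).
  set (J := fun b => RInt (bessel_kernel (/ e1) outage_beta) 0 b).
  assert (HI : forall b, is_RInt (fun x => exp_pdf e1 x * outage_inner x) 0 b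
                 (1 - exp (- b / e1) - c * J (b - outage_x0))).
  { intros b.
    pose proof (is_RInt_minus _ _ 0 b _ _ (is_RInt_exp_pdf_0 e1 b He1)
      (is_RInt_scal _ 0 b c _ (is_RInt_bessel_kernel_shift (/ e1) outage_beta
        (Rinv_0_lt_compat e1 He1) outage_beta_pos outage_x0 b (Rlt_le _ _ outage_x0_pos))))
      as HI.
    unfold minus, plus, opp, scal in HI; simpl in HI; unfold mult in HI; simpl in HI.
    eapply is_RInt_ext; [|exact HI]. intros x _. symmetry. apply outage_outer_integrand_eq. }
  apply improper_int0_of_is_lim.
  - intros b _. eexists. apply HI.
  - apply (is_lim_ext (fun b => 1 - exp (- b / e1) - c * J (b - outage_x0))).
    + intros b. symmetry. exact (is_RInt_unique _ _ _ _ (HI b)).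
    + apply is_lim_minus'; [now apply is_lim_exp_cdf|].
      apply (is_lim_scal_l _ _ _ K), (is_lim_p_infty_shift J), HK.
Qed.

Definition outage_z : R := 2 * g * s2 / Ps * sqrt (/ (e1 * e2) * ((Ps + Pd) / Ps + / g)).

Lemma outage_z_pos : 0 < outage_z.
Proof.
  unfold outage_z. apply Rmult_lt_0_compat; [apply Rdiv_lt_0_compat; nra|].
  apply sqrt_lt_R0, Rmult_lt_0_compat; [apply Rinv_0_lt_compat; nra|exact outage_gain_pos].
Qed.

Lemma outage_z_sq : outage_z ^ 2 = 4 * / e1 * outage_beta.
Proof.
  unfold outage_z, outage_beta. rewrite Rpow_mult_distr, pow2_sqrt.
  - field. repeat split; lra.
  - apply Rlt_le, Rmult_lt_0_compat; [apply Rinv_0_lt_compat; nra|exact outage_gain_pos].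
Qed.

Lemma af_outage_prob_is_of_bessel_kernel (K : R) :
  is_lim (fun b => RInt (bessel_kernel (/ e1) outage_beta) 0 b) p_infty (outage_z / / e1 * K) ->
  af_outage_prob_is e1 e2 Ps Pd s2 g (1 - exp (- outage_c0) * outage_z * K).
Proof.
  intros HK. exists outage_inner. split.
  - exact improper_int0_outage_inner.
  - replace (1 - exp (- outage_c0) * outage_z * K)
      with (1 - / e1 * exp (- outage_c0) * (outage_z / / e1 * K)) by (field; lra).
    now apply improper_int0_outage_outer.
Qed.

End OutageRegion.

Lemma Rpower_2_sub_1_pos (r : R) : 0 < r -> 0 < Rpower 2 r - 1.
Proof.
  intros Hr. assert (Hpow : Rpower 2 0 < Rpower 2 r) by (apply Rpower_lt; lra).
  rewrite Rpower_O in Hpow by lra. lra.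
Qed.

Theorem mainTheorem6 (e1 e2 Ps Pd sigma2 Rd : R) :
  0 < e1 -> 0 < e2 -> 0 < Ps -> 0 < Pd -> 0 < sigma2 -> 0 < Rd ->
  let gamma := Rpower 2 (2 * Rd) - 1 in
  let z := 2 * gamma * sigma2 / Ps *
           sqrt (/ (e1 * e2) * ((Ps + Pd) / Ps + / gamma)) in
  exists k : R, is_BesselK1 z k /\
    af_outage_prob_is e1 e2 Ps Pd sigma2 gamma
      (1 - exp (- (gamma * sigma2 / Ps) * ((Ps + Pd) / (Ps * e1) + / e2)) * z * k).
Proof.
  intros He1 He2 HPs HPd Hs2 HRd gamma z.
  assert (Hg : 0 < gamma) by (apply Rpower_2_sub_1_pos; lra).
  destruct (is_BesselK1_of_bessel_kernel (/ e1) (outage_beta Ps Pd sigma2 gamma e2)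
      (Rinv_0_lt_compat e1 He1) ltac:(now apply outage_beta_pos)
      z ltac:(now apply outage_z_pos) ltac:(now apply outage_z_sq)) as [K [HB HK]].
  exists K. split; [exact HB|].
  replace (- (gamma * sigma2 / Ps) * ((Ps + Pd) / (Ps * e1) + / e2))
    with (- outage_c0 Ps Pd sigma2 gamma e1 e2) by (unfold outage_c0; ring).
  now apply af_outage_prob_is_of_bessel_kernel.
Qed.
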